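(* Let $p>2$ be a prime, $d\geq 2$ an integer with $d\mid p-1$, $f=(p-1)/d$, and $\omega$ a fixed generator of $\mathbb{F}_p^*$. Let $\theta=0$ if $f$ is even and $\theta=d/2$ if $f$ is odd. Let $\zeta\in\mathbb{C}$ be a primitive $p$-th root of unity and, for $i\in\mathbb{Z}/d\mathbb{Z}$, let $\eta_i=\sum_{k=0}^{f-1}\zeta^{\omega^{kd+i}}$ be the Gauss periods. For $i,j\in\mathbb{Z}/d\mathbb{Z}$ let $(i,j)=\#\{(u,v):0\leq u,v\leq f-1,\ 1+\omega^{du+i}\equiv\omega^{dv+j}\pmod p\}$ be the cyclotomic numbers of order $d$. For integers $k\geq 0$ and $0\leq\nu\leq d-1$ put $n(k,\nu)=\sum_{i=0}^{d-1}\eta_i^k\,\eta_{i+\nu}$ (indices mod $d$). Then $n(0,\nu)=-1$, $n(1,\nu)=p\,\delta_{\theta\nu}-f$, and for all $0\leq\nu\leq d-1$ and $k\geq 1$, \[ n(k+1,\nu)=\sum_{l=0}^{d-1}(\nu,l)\,n(k,l)+f\,\delta_{\theta\nu}\,n(k-1,0), \] where $\delta$ denotes the Kronecker delta.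
   Context: Indices of $\eta_i$ and of the cyclotomic numbers $(i,j)$ are taken modulo $d$. $\omega^{m}$ in the exponent of $\zeta$ is interpreted via any integer representative of $\omega^m\in\mathbb{F}_p$. *)

From mathcomp Require Import all_boot all_order all_algebra all_field.
Unset Printing Implicit Defensive.
Import GRing.Theory Num.Theory.
Local Open Scope ring_scope.

(* Gauss period eta_i = sum_{k=0}^{f-1} zeta^(omega^(k d + i)); the exponent
   omega^m in 'F_p is interpreted via its canonical representative in [0,p). *)
Definition gauss_period (p d f : nat) (omega : 'F_p) (zeta : algC) (i : nat) : algC :=
  \sum_(k < f) zeta ^+ (nat_of_ord (omega ^+ (k * d + i)%N)).

Definition cyclo_num (p d f : nat) (omega : 'F_p) (i j : nat) : nat :=
  #|[set uv : 'I_f * 'I_f |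
      1 + omega ^+ (d * uv.1 + i)%N == omega ^+ (d * uv.2 + j)%N]|.

Definition nkv (p d f : nat) (omega : 'F_p) (zeta : algC) (k nu : nat) : algC :=
  \sum_(i < d) gauss_period p d f omega zeta i ^+ k * gauss_period p d f omega zeta (i + nu)%N.

Definition theta (d f : nat) : nat := (if odd f then d %/ 2 else 0)%N.

Definition kdelta (a b : nat) : algC := (a == b)%:R.

From mathcomp Require Import all_boot all_order all_algebra all_field.
From mathcomp Require Import zify ring.
Import GRing.Theory Num.Theory.
Local Open Scope ring_scope.

(* Put [T i y := \sum_(u < f) zeta ^+ (omega ^+ (u * d + i) * y)]. Shifting the
   summation index of the second factor gives
   [eta_i * eta_(i + nu) = \sum_(a < f) T i (1 + omega ^+ (d * a + nu))], and
   [T i y] is [eta_(i + l)] when [y = omega ^+ (d * b + l)], while [T i 0 = f].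
   Sorting the [a] accordingly yields
   [eta_i * eta_(i + nu) = f * delta_(theta, nu) + \sum_l (nu, l) * eta_(i + l)],
   since [1 + omega ^+ m = 0] exactly when [m = (p - 1) / 2 = d * (f / 2) + theta]
   modulo [p - 1]. Multiplying by [eta_i ^+ k] and summing over [i] gives the
   recursion; the initial values follow from [\sum_i eta_i = \sum_(x != 0) zeta ^+ x = -1]
   and [\sum_l (nu, l) = f - delta_(theta, nu)]. *)

Lemma big_ord_addn_periodic {V : nmodType} (g : nat -> V) (n s : nat) :
  (forall i, g (i + n)%N = g i) -> \sum_(i < n) g (i + s)%N = \sum_(i < n) g i.
Proof.
move=> g_per; elim: s => [|s IHs]; first by apply: eq_bigr => i _; rewrite addn0.
rewrite -IHs; case: n g_per {IHs} => [|n] g_per; first by rewrite !big_ord0.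
rewrite big_ord_recr [in RHS]big_ord_recl /= -addSnnS addnC g_per add0n addrC.
by congr (_ + _); apply: eq_bigr => i _; rewrite /bump /= add1n addnS addSn.
Qed.

Lemma natr_card_set {R : pzSemiRingType} {T : finType} (P : pred T) :
  (#|[set z | P z]|)%:R = \sum_z (P z)%:R :> R.
Proof.
rewrite -sum1_card natr_sum big_mkcond /=; apply: eq_bigr => z _.
by rewrite inE; case: (P z).
Qed.

Lemma sum_comp_card_fiber {R : pzSemiRingType} {T U : finType}
    (phi : T -> U) (g : U -> R) :
  \sum_z g (phi z) = \sum_x (#|[set z | phi z == x]|)%:R * g x.
Proof.
under [RHS]eq_bigr => x _ do rewrite natr_card_set mulr_suml.
rewrite exchange_big; apply: eq_bigr => z _.
rewrite (bigD1 (phi z)) //= eqxx mul1r big1 ?addr0 // => x /negbTE.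
by rewrite eq_sym => ->; rewrite mul0r.
Qed.

Lemma eqn_mul_addn (d a b a' b' : nat) : (b < d)%N -> (b' < d)%N ->
  (d * a + b == d * a' + b')%N = (a == a') && (b == b').
Proof.
move=> lt_bd lt_b'd; have d_gt0 : (0 < d)%N by apply: leq_ltn_trans lt_bd.
apply/eqP/andP => [E|[/eqP-> /eqP->] //]; split; apply/eqP.
  have := congr1 (divn^~ d) E; rewrite /= ![(d * _)%N]mulnC.
  by rewrite !divnMDl // !divn_small // !addn0.
by have := congr1 (modn^~ d) E; rewrite /= ![(d * _)%N]mulnC !modnMDl !modn_small.
Qed.

Lemma half_mul_theta (d f : nat) : ~~ odd (d * f) ->
  ((d * f)./2 = d * f./2 + theta d f)%N.
Proof.
move=> even_df; have := odd_double_half f; have := odd_double_half d.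
have := odd_double_half (d * f); move: even_df; rewrite /theta !oddM -!divn2.
by case: (odd d); case: (odd f) => /= *; nia.
Qed.

Lemma theta_lt (d f : nat) : (0 < d)%N -> (theta d f < d)%N.
Proof. by rewrite /theta; case: (odd f) => //; lia. Qed.

Lemma prim_expr_half {F : idomainType} {n : nat} {w : F} :
  n.-primitive_root w -> ~~ odd n -> w ^+ n./2 = -1.
Proof.
move=> w_prim even_n; have n_gt0 := prim_order_gt0 w_prim.
have half_gt0 : (0 < n./2)%N by rewrite half_gt0; case: n even_n n_gt0 {w_prim} => [|[]].
have /orP[] : (w ^+ n./2 == 1) || (w ^+ n./2 == -1).
- rewrite -sqrf_eq1 -exprM muln2.
  move: (odd_double_half n); rewrite (negbTE even_n) add0n => ->.
  by rewrite (prim_expr_order w_prim).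
- by rewrite -(prim_order_dvd w_prim) gtnNdvd // -divn2 ltn_Pdiv.
- by move/eqP.
Qed.

Section GaussPeriods.

Variables (p : nat) (zeta : algC).
Hypotheses (p_pr : prime p) (zeta_prim : p.-primitive_root zeta).

(* Arithmetic in ['F_p] is modulo [(Zp_trunc (pdiv p)).+2], which is [p] only for prime [p]. *)
Lemma expr_Fp_mod (m : nat) : zeta ^+ (m %% (Zp_trunc (pdiv p)).+2) = zeta ^+ m.
Proof. by rewrite Fp_cast // prim_expr_mod. Qed.

Lemma expr_FpD (x y : 'F_p) :
  zeta ^+ (nat_of_ord (x + y)) = zeta ^+ x * zeta ^+ y.
Proof. by rewrite -exprD /= expr_Fp_mod. Qed.

Lemma sum_expr_Fp : \sum_(x : 'F_p) zeta ^+ x = 0.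
Proof.
set S := \sum_(x : 'F_p) _.
have zeta1 : zeta != 1.
  by rewrite -[zeta]expr1 -(prim_order_dvd zeta_prim) dvdn1 gtn_eqF ?prime_gt1.
have S_rot : S = zeta * S.
  rewrite {1}/S (reindex_inj (addrI 1)) mulr_sumr; apply: eq_bigr => x _.
  by rewrite expr_FpD.
apply/eqP; move/eqP: S_rot; rewrite -subr_eq0 -{1}(mul1r S) -mulrBl mulf_eq0.
by rewrite subr_eq0 eq_sym (negbTE zeta1).
Qed.

Lemma sum_expr_Fp_neq0 : \sum_(x : 'F_p | x != 0) zeta ^+ x = -1.
Proof.
have := sum_expr_Fp; rewrite (bigD1 0) //= expr0 addrC => /eqP.
by rewrite addr_eq0 => /eqP.
Qed.

Variables (d : nat) (omega : 'F_p).
Hypotheses (p_gt2 : (2 < p)%N) (d_gt0 : (0 < d)%N) (d_dvd : (d %| p.-1)%N)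
  (omega_prim : p.-1.-primitive_root omega).

Local Notation f := (p.-1 %/ d)%N.
Local Notation eta := (gauss_period p d f omega zeta).

Lemma predp_factor : p.-1 = (d * f)%N.
Proof. by rewrite mulnC divnK. Qed.

Definition omega_pow (z : 'I_d * 'I_f) : 'F_p := omega ^+ (d * z.2 + z.1).

Lemma omega_pow_exp_lt (z : 'I_d * 'I_f) : (d * z.2 + z.1 < p.-1)%N.
Proof. by case: z => [[a lt_ad] [b lt_bf]] /=; rewrite predp_factor; nia. Qed.

Lemma card_omega_pow_fiber (x : 'F_p) : #|[set z | omega_pow z == x]| = (x != 0).
Proof.
have [-> | x_neq0] := eqVneq x 0.
  apply/eqP; rewrite cards_eq0; apply/eqP/setP => z; rewrite !inE /omega_pow.
  rewrite expf_eq0 (prim_root_eq0 omega_prim) gtn_eqF ?andbF //.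
  exact: prim_order_gt0 omega_prim.
have x_unit : x ^+ p.-1 = 1.
  apply: (mulfI x_neq0); rewrite mulr1 -exprS prednK ?prime_gt0 //.
  by rewrite -[in RHS](expf_card x) card_Fp.
have [m ->] := prim_rootP omega_prim x_unit.
have lt_md : (m %% d < d)%N by rewrite ltn_pmod.
have lt_mf : (m %/ d < f)%N by rewrite ltn_divLR // divnK // ltn_ord.
rewrite (_ : [set _ | _] = [set (Ordinal lt_md, Ordinal lt_mf)]) ?cards1 //.
apply/setP => -[a b]; rewrite !inE /omega_pow (eq_prim_root_expr omega_prim).
rewrite !modn_small ?(omega_pow_exp_lt (a, b)) // xpair_eqE -!val_eqE /=.
by rewrite [X in (_ == X)%N](divn_eq m d) [(_ * d)%N]mulnC eqn_mul_addn // andbC.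
Qed.

Lemma sum_omega_exp_eq (y : 'F_p) :
  \sum_(l < d) \sum_(b < f) ((y == omega ^+ (d * b + l))%:R : algC) = (y != 0)%:R.
Proof.
rewrite pair_big -card_omega_pow_fiber natr_card_set.
by apply: eq_bigr => z _; rewrite eq_sym.
Qed.

Lemma omega_exp_periodic (k c : nat) : omega ^+ ((k + f) * d + c) = omega ^+ (k * d + c).
Proof.
rewrite mulnDl divnK // -addnA [(p.-1 + c)%N]addnC addnA exprD.
by rewrite (prim_expr_order omega_prim) mulr1.
Qed.

Lemma gauss_periodDd (i : nat) : eta (i + d) = eta i.
Proof.
rewrite /gauss_period -(big_ord_addn_periodic
  (fun k => zeta ^+ (omega ^+ (k * d + i))) f 1); last first.
  by move=> k; rewrite omega_exp_periodic.
by apply: eq_bigr => k _; rewrite (_ : (k * d + (i + d) = (k + 1) * d + i)%N) //; ring.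
Qed.

Lemma sum_gauss_period (l : nat) : \sum_(i < d) eta (i + l) = -1.
Proof.
rewrite (big_ord_addn_periodic (fun i => eta i)); last exact: gauss_periodDd.
transitivity (\sum_(z : 'I_d * 'I_f) zeta ^+ (omega_pow z)).
  rewrite pair_big /=; apply: eq_bigr => -[a b] _.
  by rewrite /omega_pow mulnC.
rewrite (sum_comp_card_fiber omega_pow (fun x => zeta ^+ x)) -sum_expr_Fp_neq0.
rewrite [RHS]big_mkcond; apply: eq_bigr => x _ /=.
by rewrite card_omega_pow_fiber; case: (x != 0); rewrite ?mul1r ?mul0r.
Qed.

Definition twisted_period (i : nat) (y : 'F_p) : algC :=
  \sum_(u < f) zeta ^+ (nat_of_ord (omega ^+ (u * d + i) * y)).

Lemma twisted_period0 (i : nat) : twisted_period i 0 = f%:R.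
Proof.
rewrite /twisted_period; under eq_bigr do rewrite mulr0.
by rewrite sumr_const card_ord.
Qed.

Lemma twisted_period_omega_exp (i l b : nat) :
  twisted_period i (omega ^+ (d * b + l)) = eta (i + l).
Proof.
rewrite /gauss_period -(big_ord_addn_periodic
  (fun u => zeta ^+ (omega ^+ (u * d + (i + l)))) f b); last first.
  by move=> u; rewrite omega_exp_periodic.
apply: eq_bigr => u _; rewrite -exprD.
by rewrite (_ : (u * d + i + (d * b + l) = (u + b) * d + (i + l))%N) //; ring.
Qed.

Lemma twisted_period_decomp (i : nat) (y : 'F_p) :
  twisted_period i y = f%:R * (y == 0)%:R +
    \sum_(l < d) \sum_(b < f) (y == omega ^+ (d * b + l))%:R * eta (i + l).
Proof.
have -> : \sum_(l < d) \sum_(b < f) (y == omega ^+ (d * b + l))%:R * eta (i + l) =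
          (y != 0)%:R * twisted_period i y.
  rewrite -sum_omega_exp_eq !mulr_suml; apply: eq_bigr => l _.
  rewrite mulr_suml; apply: eq_bigr => b _.
  have [->|] := eqVneq y (omega ^+ (d * b + l)); rewrite ?mul0r //.
  by rewrite twisted_period_omega_exp.
have [->|_] := eqVneq y 0; rewrite /= ?mulr1n ?mulr0n ?mulr1 ?mulr0 ?mul1r ?mul0r.
  by rewrite twisted_period0 addr0.
by rewrite add0r.
Qed.

Lemma gauss_period_mul (i nu : nat) :
  eta i * eta (i + nu) = \sum_(a < f) twisted_period i (1 + omega ^+ (d * a + nu)).
Proof.
rewrite /twisted_period exchange_big /gauss_period mulr_suml; apply: eq_bigr => u _.
rewrite mulr_sumr -(big_ord_addn_periodic
  (fun v => zeta ^+ (omega ^+ (u * d + i)) * zeta ^+ (omega ^+ (v * d + (i + nu)))) f u);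
  last by move=> v; rewrite omega_exp_periodic.
apply: eq_bigr => a _; rewrite mulrDr mulr1 -[omega ^+ _ * _]exprD expr_FpD.
by rewrite (_ : (u * d + i + (d * a + nu) = (a + u) * d + (i + nu))%N) //; ring.
Qed.

Lemma cyclo_num_sum (nu l : nat) :
  (cyclo_num p d f omega nu l)%:R =
  \sum_(a < f) \sum_(b < f) ((1 + omega ^+ (d * a + nu) == omega ^+ (d * b + l))%:R : algC).
Proof. by rewrite natr_card_set pair_big. Qed.

Lemma card_omega_exp_eqN1 (nu : nat) : (nu < d)%N ->
  #|[set a : 'I_f | 1 + omega ^+ (d * a + nu) == 0]| = (theta d f == nu).
Proof.
move=> lt_nud; have predp_gt0 := prim_order_gt0 omega_prim.
have p_odd : odd p by apply: contraLR p_gt2 => /(prime_oddPn p_pr) ->.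
have even_predp : ~~ odd p.-1 by rewrite -(prednK (prime_gt0 p_pr)) in p_odd.
have half_lt : ((p.-1)./2 < p.-1)%N by rewrite -divn2 ltn_Pdiv.
have := half_mul_theta d f; rewrite -predp_factor => /(_ even_predp) half_eq.
have f_half_lt : (f./2 < f)%N by rewrite -divn2 ltn_Pdiv // divn_gt0 // dvdn_leq.
have key (a : 'I_f) :
    (1 + omega ^+ (d * a + nu) == 0) = (val a == f./2) && (theta d f == nu).
  have lt_exp : (d * a + nu < p.-1)%N.
    by case: a => a /= lt_af; rewrite predp_factor; nia.
  rewrite addrC addr_eq0 -(prim_expr_half omega_prim even_predp).
  rewrite (eq_prim_root_expr omega_prim) !modn_small // half_eq.
  by rewrite eqn_mul_addn ?theta_lt // [nu == _]eq_sym.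
have [eq_theta|ne_theta] := eqVneq (theta d f) nu.
  rewrite (_ : [set _ | _] = [set Ordinal f_half_lt]) ?cards1 ?eq_theta ?eqxx //.
  by apply/setP => a; rewrite !inE key -val_eqE /= eq_theta eqxx andbT.
apply/eqP; rewrite cards_eq0; apply/eqP/setP => a.
by rewrite !inE key (negbTE ne_theta) andbF.
Qed.

Lemma gauss_period_mul_cyclo (i nu : nat) : (nu < d)%N ->
  eta i * eta (i + nu) = f%:R * kdelta (theta d f) nu +
    \sum_(l < d) (cyclo_num p d f omega nu l)%:R * eta (i + l).
Proof.
move=> lt_nud; rewrite gauss_period_mul.
under eq_bigr do rewrite twisted_period_decomp.
rewrite big_split /= -mulr_sumr -natr_card_set card_omega_exp_eqN1 //.
congr (_ + _); rewrite exchange_big; apply: eq_bigr => l _.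
rewrite cyclo_num_sum !mulr_suml; apply: eq_bigr => a _.
by rewrite mulr_suml.
Qed.

Lemma sum_cyclo_num (nu : nat) : (nu < d)%N ->
  \sum_(l < d) (cyclo_num p d f omega nu l)%:R = f%:R - kdelta (theta d f) nu.
Proof.
move=> lt_nud; under eq_bigr do rewrite cyclo_num_sum.
rewrite exchange_big /= /kdelta -card_omega_exp_eqN1 // natr_card_set.
have -> : f%:R = \sum_(a < f) 1 :> algC by rewrite sumr_const card_ord.
rewrite -sumrB; apply: eq_bigr => a _.
by rewrite sum_omega_exp_eq; case: (_ == 0); rewrite /= ?mulr1n ?mulr0n ?subrr ?subr0.
Qed.

Local Notation n := (nkv p d f omega zeta).

Lemma nkv0 (nu : nat) : n 0 nu = -1.
Proof. by rewrite /nkv -(sum_gauss_period nu); apply: eq_bigr => i _; rewrite mul1r. Qed.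

Lemma nkv1 (nu : nat) : (nu < d)%N -> n 1 nu = p%:R * kdelta (theta d f) nu - f%:R.
Proof.
move=> lt_nud; rewrite /nkv; under eq_bigr do rewrite expr1 gauss_period_mul_cyclo //.
rewrite big_split /= sumr_const card_ord exchange_big /=.
under eq_bigr do rewrite -mulr_sumr sum_gauss_period mulrN1.
have p_eq : p%:R = f%:R * d%:R + 1 :> algC.
  by rewrite -natrM natr1 mulnC -predp_factor prednK ?prime_gt0.
by rewrite sumrN sum_cyclo_num // p_eq -mulr_natr; ring.
Qed.

Lemma nkvS (k nu : nat) : (0 < k)%N -> (nu < d)%N ->
  n k.+1 nu = \sum_(l < d) (cyclo_num p d f omega nu l)%:R * n k l
              + f%:R * kdelta (theta d f) nu * n k.-1 0.
Proof.
move=> k_gt0 lt_nud; rewrite /nkv.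
under eq_bigr do rewrite exprSr -mulrA gauss_period_mul_cyclo // mulrDr.
rewrite big_split /= addrC; congr (_ + _).
  under eq_bigr do rewrite mulr_sumr.
  rewrite exchange_big; apply: eq_bigr => l _; rewrite mulr_sumr.
  by apply: eq_bigr => i _; rewrite mulrCA.
rewrite mulr_sumr; apply: eq_bigr => i _.
by rewrite addn0 mulrC -exprSr prednK.
Qed.

End GaussPeriods.

Theorem lemma1 (p d : nat) (omega : 'F_p) (zeta : algC) :
  prime p -> (2 < p)%N -> (2 <= d)%N -> (d %| p.-1)%N ->
  (p.-1).-primitive_root omega ->
  p.-primitive_root zeta ->
  let f := (p.-1 %/ d)%N in
  let n := nkv p d f omega zeta in
  let th := theta d f in
  forall nu : nat, (nu < d)%N ->
    [/\ n 0%N nu = -1,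
        n 1%N nu = p%:R * kdelta th nu - f%:R
      & forall k : nat, (1 <= k)%N ->
          n k.+1 nu = \sum_(l < d) (cyclo_num p d f omega nu l)%:R * n k l
                      + f%:R * kdelta th nu * n k.-1 0%N].
Proof.
move=> p_pr p_gt2 d_ge2 d_dvd omega_prim zeta_prim f n th nu lt_nud.
have d_gt0 : (0 < d)%N by apply: leq_trans d_ge2.
split; [exact: nkv0 | exact: nkv1 | by move=> k k_gt0; apply: nkvS].
Qed.
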